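(* Let $\mathbf{s}_1,\dots,\mathbf{s}_l\in\mathbb{Q}^n$, let $\mathcal P\subseteq\mathbb{R}^n$ be the convex hull of $\bigcup_{i=1}^l(\mathbf{s}_i+\mathbb{R}_{\le0}^n)$ and $P=\mathcal P\cap\mathbb{Q}^n$. Then $$K\{\mathbf{X};P\}=\bigcap_{i=1}^l K\{\mathbf{X};\mathbf{s}_i\}.$$
   Context: $K$ is a field complete for a discrete valuation $\mathrm{val}$. For $\mathbf{r}\in\mathbb{Q}^n$, $\mathrm{val}_{\mathbf{r}}(a\mathbf{X}^\alpha)=\mathrm{val}(a)-\mathbf{r}\cdot\alpha$, and $K\{\mathbf{X};\mathbf{r}\}$ is the set of power series $\sum_{\alpha\in\mathbb{N}^n}a_\alpha\mathbf{X}^\alpha$ ($a_\alpha\in K$) with $\mathrm{val}_{\mathbf{r}}(a_\alpha\mathbf{X}^\alpha)\to+\infty$ as $|\alpha|\to\infty$. For $P\subseteq\mathbb{Q}^n$, $K\{\mathbf{X};P\}$ is the set of power series $\sum a_\alpha\mathbf{X}^\alpha$ such that for every $\mathbf{r}\in P$, $\mathrm{val}_{\mathbf{r}}(a_\alpha\mathbf{X}^\alpha)\to+\infty$ as $|\alpha|\to\infty$. *)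

From HB Require Import structures.
From mathcomp Require Import all_boot all_order all_algebra.
From mathcomp Require Import reals.
Set Implicit Arguments. Unset Strict Implicit. Unset Printing Implicit Defensive.
Import Order.TTheory GRing.Theory Num.Theory.
Local Open Scope ring_scope.

(* A (normalized) discrete valuation on a field K, given by its values on
   nonzero elements; by convention val 0 = +oo, so val is never consulted at 0. *)
Definition is_discrete_valuation (K : fieldType) (val : K -> int) : Prop :=
  [/\ (forall x y : K, x != 0 -> y != 0 -> val (x * y) = val x + val y),
      (forall x y : K, x != 0 -> y != 0 -> x + y != 0 ->
          Num.min (val x) (val y) <= val (x + y))
    & (exists pi : K, pi != 0 /\ val pi = 1)].

(* "val x >= M", with the convention val 0 = +oo *)
Definition val_ge (K : fieldType) (val : K -> int) (x : K) (M : int) : Prop :=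
  x = 0 \/ M <= val x.

Definition val_complete (K : fieldType) (val : K -> int) : Prop :=
  forall u : nat -> K,
    (forall M : int, exists N : nat, forall m p : nat, (N <= m)%N -> (N <= p)%N ->
        val_ge val (u m - u p) M) ->
    exists l : K, forall M : int, exists N : nat, forall m : nat, (N <= m)%N ->
        val_ge val (u m - l) M.

Definition multi_deg (n : nat) (alpha : 'I_n -> nat) : nat := (\sum_(k < n) alpha k)%N.

(* val_r (a X^alpha) = val a - r . alpha  (as a rational; +oo when a = 0) *)
(* a power series is a coefficient family f : (N^n) -> K;
   in_Kr val r f  <->  f belongs to K{X; r} *)
Definition in_Kr (K : fieldType) (val : K -> int) (n : nat) (r : 'I_n -> rat)
    (f : ('I_n -> nat) -> K) : Prop :=
  forall M : rat, exists N : nat, forall alpha : 'I_n -> nat,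
    (N <= multi_deg alpha)%N ->
    f alpha = 0 \/ M <= (val (f alpha))%:~R - \sum_(k < n) r k * (alpha k)%:R.

Definition in_KP (K : fieldType) (val : K -> int) (n : nat) (P : ('I_n -> rat) -> Prop)
    (f : ('I_n -> nat) -> K) : Prop :=
  forall r, P r -> in_Kr val r f.

Definition conv_hull (R : realType) (n : nat) (A : ('I_n -> R) -> Prop) (x : 'I_n -> R) : Prop :=
  exists (m : nat) (w : 'I_m -> R) (p : 'I_m -> ('I_n -> R)),
    [/\ (forall j, 0 <= w j), \sum_(j < m) w j = 1, (forall j, A (p j))
      & (forall k, x k = \sum_(j < m) w j * p j k)].

Definition union_orthants (R : realType) (n l : nat) (s : 'I_l -> 'I_n -> rat)
    (y : 'I_n -> R) : Prop :=
  exists i : 'I_l, forall k, y k <= ratr (s i k).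

Definition Ppoly (R : realType) (n l : nat) (s : 'I_l -> 'I_n -> rat) (r : 'I_n -> rat) : Prop :=
  conv_hull (@union_orthants R n l s) (fun k => ratr (r k)).

From HB Require Import structures.
From mathcomp Require Import all_boot all_order all_algebra.
From mathcomp Require Import reals.
Import Order.TTheory GRing.Theory Num.Theory.
Local Open Scope ring_scope.

(* The exponent [val a - r . alpha] of a term [a X^alpha] is affine in [r] and,
   as [alpha >= 0], nonincreasing in every coordinate of [r].  A lower bound for
   it that holds at each [s_i] therefore holds on every orthant
   [s_i + R_{<=0}^n] and on their convex hull; since there are finitely many
   [s_i], the degree beyond which the bound holds can be chosen uniformly. *)

Lemma conv_hull_mem {R : realType} {n : nat} (A : ('I_n -> R) -> Prop) x :
  A x -> conv_hull A x.
Proof.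
move=> Ax; exists 1%N, (fun _ => 1), (fun _ => x); split=> //.
- by rewrite big_ord1.
- by move=> k; rewrite big_ord1 mul1r.
Qed.

Lemma conv_hull_sum_le {R : realType} {n : nat} {A : ('I_n -> R) -> Prop}
    (c : 'I_n -> R) (b : R) x :
  conv_hull A x -> (forall y, A y -> \sum_k y k * c k <= b) ->
  \sum_k x k * c k <= b.
Proof.
move=> [m [w [p [w_ge0 w_sum1 Ap x_comb]]]] Ab.
have -> : \sum_k x k * c k = \sum_j w j * \sum_k p j k * c k.
  under eq_bigr => k _ do rewrite x_comb mulr_suml.
  rewrite exchange_big; apply: eq_bigr => j _; rewrite mulr_sumr.
  by apply: eq_bigr => k _; rewrite mulrA.
have -> : b = \sum_j w j * b by rewrite -mulr_suml w_sum1 mul1r.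
by apply: ler_sum => j _; apply: ler_wpM2l; [exact: w_ge0 | exact: Ab].
Qed.

Lemma Ppoly_vertex (R : realType) {n l : nat} (s : 'I_l -> 'I_n -> rat) i :
  Ppoly R s (s i).
Proof. by apply: conv_hull_mem; exists i. Qed.

Lemma Ppoly_sum_le {R : realType} {n l : nat} {s : 'I_l -> 'I_n -> rat}
    (c : 'I_n -> rat) (b : rat) r :
  (forall k, 0 <= c k) -> (forall i, \sum_k s i k * c k <= b) ->
  Ppoly R s r -> \sum_k r k * c k <= b.
Proof.
move=> c_ge0 s_le hull_r.
have ratr_sum (x : 'I_n -> rat) :
    ratr (\sum_k x k * c k) = \sum_k ratr (x k) * ratr (c k) :> R.
  by rewrite rmorph_sum; apply: eq_bigr => k _; rewrite rmorphM.
rewrite -(ler_rat R) ratr_sum; apply: conv_hull_sum_le hull_r _ => y [i y_le].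
apply: le_trans (_ : \sum_k ratr (s i k) * ratr (c k) <= _).
  by apply: ler_sum => k _; rewrite ler_wpM2r ?ler0q.
by rewrite -ratr_sum ler_rat.
Qed.

Lemma in_Kr_uniform {K : fieldType} {val : K -> int} {n l : nat}
    {s : 'I_l -> 'I_n -> rat} {f : ('I_n -> nat) -> K} :
  (forall i, in_Kr val (s i) f) ->
  forall M : rat, exists N : nat, forall alpha, (N <= multi_deg alpha)%N ->
    f alpha = 0 \/
    forall i, M <= (val (f alpha))%:~R - \sum_k s i k * (alpha k)%:R.
Proof.
move=> in_s M; have [N N_s] := fin_all_exists (fun i => in_s i M).
exists (\max_i N i)%N => alpha deg_ge.
case: (eqVneq (f alpha) 0) => [|fa_neq0]; [by left | right] => i.
have [fa_eq0|//] := N_s i alpha (leq_trans (leq_bigmax i) deg_ge).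
by rewrite fa_eq0 eqxx in fa_neq0.
Qed.

Theorem mainTheorem12 (R : realType) (K : fieldType) (val : K -> int)
  (hval : is_discrete_valuation val) (hcomp : val_complete val)
  (n l : nat) (s : 'I_l -> 'I_n -> rat) (f : ('I_n -> nat) -> K) :
  in_KP val (@Ppoly R n l s) f <-> (forall i : 'I_l, in_Kr val (s i) f).
Proof.
split=> [in_P i | in_s r hull_r M]; first exact/in_P/Ppoly_vertex.
have [N N_s] := in_Kr_uniform in_s M.
exists N => alpha deg_ge; have [|bound_s] := N_s alpha deg_ge; first by left.
right; rewrite lerBrDr -lerBrDl; apply: Ppoly_sum_le hull_r => [k|i].
  exact: ler0n.
by rewrite lerBrDl -lerBrDr.
Qed.
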